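(* Let $\mathcal C$ be a category with a class of cofibrations and a class of fibrations such that every map from a cofibrant object to a fibrant object factors both as a cofibration followed by an acyclic fibration and as an acyclic cofibration followed by a fibration. The following conditions are equivalent: (i) for any bifibrant object $A$ and any factorization $\mathrm{Id}_A\colon A\hookrightarrow B\to A$ of the identity as a cofibration followed by an acyclic fibration, the cofibration is acyclic; (ii) there is a class $\mathcal F$ of acyclic fibrations such that any map from a cofibrant object to a fibrant object factors as a cofibration followed by a map in $\mathcal F$, and condition (i) holds for those factorizations whose acyclic fibration part is in $\mathcal F$; (iii) any cofibration $A\hookrightarrow B$ with $A$ cofibrant and $B$ fibrant admits a relative cylinder object; (iv) any cofibration $A\hookrightarrow B$ between bifibrant objects admits a relative cylinder object.
   Context: A class of cofibrations: a class of maps with a cofibrant initial object $0$ ($X$ cofibrant iff $0\to X$ is a cofibration), containing isomorphisms with cofibrant domain, closed under composition, and such that pushouts of a cofibration $A\to B$ along $A\to C$ with $A,C$ cofibrant exist and $C\to C\sqcup_AB$ is a cofibration; a class of fibrations is the dual notion (fibrant objects dually). Bifibrant = fibrant and cofibrant. Acyclic fibration: fibration with the right lifting property against all cofibrations between cofibrant objects; acyclic cofibration: cofibration with the left lifting property against all fibrations between fibrant objects. A relative (strong) cylinder object for a cofibration $A\to B$ is a factorization $B\sqcup_AB\to I_AB\to B$ of the codiagonal whose first map is a cofibration and whose restriction along the first inclusion $B\to B\sqcup_AB$ is an acyclic cofibration. *)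

Record Category := {
  Ob :> Type;
  Hom : Ob -> Ob -> Type;
  comp : forall a b c : Ob, Hom b c -> Hom a b -> Hom a c;
  idm : forall a : Ob, Hom a a;
  comp_assoc : forall a b c d (h : Hom c d) (g : Hom b c) (f : Hom a b),
      comp a c d h (comp a b c g f) = comp a b d (comp b c d h g) f;
  id_left : forall a b (f : Hom a b), comp a b b (idm b) f = f;
  id_right : forall a b (f : Hom a b), comp a a b f (idm a) = f
}.

Arguments Hom {C} a b : rename.
Arguments comp {C a b c} g f : rename.
Arguments idm {C} a : rename.

Notation "g ∘ f" := (comp g f) (at level 40, left associativity).

Section Defs.
Variable C : Category.

Definition MapClass := forall a b : Ob C, @Hom C a b -> Prop.

Definition is_iso {a b : Ob C} (f : Hom a b) : Prop :=
  exists g : Hom b a, g ∘ f = idm a /\ f ∘ g = idm b.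

Definition is_initial (z : Ob C) : Prop :=
  forall X : Ob C, inhabited (Hom z X) /\ forall f g : Hom z X, f = g.

Definition is_terminal (t : Ob C) : Prop :=
  forall X : Ob C, inhabited (Hom X t) /\ forall f g : Hom X t, f = g.

(* with z initial: "the" map z -> X lies in cof *)
Definition cofibrant (cof : MapClass) (z X : Ob C) : Prop :=
  exists f : Hom z X, cof _ _ f.

Definition fibrant (fib : MapClass) (t X : Ob C) : Prop :=
  exists f : Hom X t, fib _ _ f.

Definition is_pushout {A B Cc : Ob C} (i : Hom A B) (f : Hom A Cc)
  (D : Ob C) (j : Hom Cc D) (g : Hom B D) : Prop :=
  j ∘ f = g ∘ i /\
  forall (E : Ob C) (u : Hom Cc E) (v : Hom B E), u ∘ f = v ∘ i ->
    exists h : Hom D E, h ∘ j = u /\ h ∘ g = v /\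
      forall h' : Hom D E, h' ∘ j = u -> h' ∘ g = v -> h' = h.

Definition is_pullback {X Y Z : Ob C} (p : Hom X Y) (g : Hom Z Y)
  (P : Ob C) (q : Hom P Z) (r : Hom P X) : Prop :=
  g ∘ q = p ∘ r /\
  forall (E : Ob C) (u : Hom E Z) (v : Hom E X), g ∘ u = p ∘ v ->
    exists h : Hom E P, q ∘ h = u /\ r ∘ h = v /\
      forall h' : Hom E P, q ∘ h' = u -> r ∘ h' = v -> h' = h.

Definition is_cofibration_class (cof : MapClass) (z : Ob C) : Prop :=
  is_initial z /\
  cof _ _ (idm z) /\
  (forall A B (f : Hom A B), is_iso f -> cofibrant cof z A -> cof _ _ f) /\
  (forall A B D (f : Hom A B) (g : Hom B D), cof _ _ f -> cof _ _ g -> cof _ _ (g ∘ f)) /\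
  (forall A B Cc (i : Hom A B) (f : Hom A Cc),
     cof _ _ i -> cofibrant cof z A -> cofibrant cof z Cc ->
     (exists D (j : Hom Cc D) (g : Hom B D), is_pushout i f D j g) /\
     (forall D (j : Hom Cc D) (g : Hom B D), is_pushout i f D j g -> cof _ _ j)).

Definition is_fibration_class (fib : MapClass) (t : Ob C) : Prop :=
  is_terminal t /\
  fib _ _ (idm t) /\
  (forall A B (f : Hom A B), is_iso f -> fibrant fib t B -> fib _ _ f) /\
  (forall A B D (f : Hom A B) (g : Hom B D), fib _ _ f -> fib _ _ g -> fib _ _ (g ∘ f)) /\
  (forall X Y Z (p : Hom X Y) (g : Hom Z Y),
     fib _ _ p -> fibrant fib t Y -> fibrant fib t Z ->
     (exists P (q : Hom P Z) (r : Hom P X), is_pullback p g P q r) /\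
     (forall P (q : Hom P Z) (r : Hom P X), is_pullback p g P q r -> fib _ _ q)).

Definition bifibrant (cof fib : MapClass) (z t X : Ob C) : Prop :=
  cofibrant cof z X /\ fibrant fib t X.

Definition llp {A B X Y : Ob C} (i : Hom A B) (p : Hom X Y) : Prop :=
  forall (u : Hom A X) (v : Hom B Y), p ∘ u = v ∘ i ->
    exists h : Hom B X, h ∘ i = u /\ p ∘ h = v.

Definition acyclic_fibration (cof fib : MapClass) (z : Ob C)
  {X Y : Ob C} (p : Hom X Y) : Prop :=
  fib _ _ p /\
  forall A B (i : Hom A B), cof _ _ i -> cofibrant cof z A -> cofibrant cof z B ->
    llp i p.

Definition acyclic_cofibration (cof fib : MapClass) (t : Ob C)
  {A B : Ob C} (i : Hom A B) : Prop :=
  cof _ _ i /\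
  forall X Y (p : Hom X Y), fib _ _ p -> fibrant fib t X -> fibrant fib t Y ->
    llp i p.

(* A relative (strong) cylinder object for i : A -> B: a factorization
   B ⊔_A B --c--> I --p--> B of the codiagonal, with c a cofibration and
   c ∘ in1 an acyclic cofibration. *)
Definition has_relative_cylinder (cof fib : MapClass) (t : Ob C)
  {A B : Ob C} (i : Hom A B) : Prop :=
  exists (P : Ob C) (in1 in2 : Hom B P), is_pushout i i P in1 in2 /\
  exists (I : Ob C) (c : Hom P I) (p : Hom I B),
    p ∘ c ∘ in1 = idm B /\ p ∘ c ∘ in2 = idm B /\
    cof _ _ c /\ acyclic_cofibration cof fib t (c ∘ in1).

End Defs.

Arguments is_iso {C a b} f.
Arguments cofibrant {C} cof z X.
Arguments fibrant {C} fib t X.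
Arguments is_pushout {C A B Cc} i f D j g.
Arguments is_pullback {C X Y Z} p g P q r.
Arguments is_cofibration_class {C} cof z.
Arguments is_fibration_class {C} fib t.
Arguments bifibrant {C} cof fib z t X.
Arguments llp {C A B X Y} i p.
Arguments acyclic_fibration {C} cof fib z {X Y} p.
Arguments acyclic_cofibration {C} cof fib t {A B} i.
Arguments has_relative_cylinder {C} cof fib t {A B} i.


(* Acyclic cofibrations are defined by a left lifting property, so they are
   closed under retracts; both implications towards (i) exhibit a section i of
   an acyclic fibration p as a retract of an acyclic cofibration.
   (ii) => (i): factor p = r c with r in F; (ii) makes c i acyclic, and a lift
   s of c against p (s c = 1, p s = r) makes i a retract of c i.
   (iv) => (i): given a relative cylinder B ⊔_A B --c--> I --q--> B, lift c
   against p with top map (i p, 1) : B ⊔_A B -> B; the lift makes i a retract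
   of the acyclic cofibration B -> I.
   (i) => (iii): factor the codiagonal of B ⊔_A B as a cofibration followed by
   an acyclic fibration; the resulting B -> I is a section of an acyclic
   fibration with bifibrant source B, hence acyclic by (i). *)

Section Retracts.
Context {C : Category}.

Definition retract_of {A B A' B' : Ob C} (i : Hom A B) (j : Hom A' B') : Prop :=
  exists (a : Hom A A') (a' : Hom A' A) (b : Hom B B') (b' : Hom B' B),
    a' ∘ a = idm A /\ b' ∘ b = idm B /\ j ∘ a = b ∘ i /\ i ∘ a' = b' ∘ j.

Lemma llp_retract {A B A' B' X Y : Ob C} (i : Hom A B) (j : Hom A' B') (p : Hom X Y) :
  retract_of i j -> llp j p -> llp i p.
Proof.
  intros [a [a' [b [b' [Ha [Hb [Hja Hia]]]]]]] Hj u v Hsq.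
  destruct (Hj (u ∘ a') (v ∘ b')) as [l [Hlj Hpl]].
  { rewrite comp_assoc, Hsq, <- comp_assoc, Hia, comp_assoc. reflexivity. }
  exists (l ∘ b). split.
  - rewrite <- comp_assoc, <- Hja, comp_assoc, Hlj, <- comp_assoc, Ha, id_right.
    reflexivity.
  - rewrite comp_assoc, Hpl, <- comp_assoc, Hb, id_right. reflexivity.
Qed.

Lemma retract_of_comp_split_mono {A B E : Ob C} (i : Hom A B) (c : Hom B E) (s : Hom E B) :
  s ∘ c = idm B -> retract_of i (c ∘ i).
Proof.
  intros Hsc. exists (idm A), (idm A), c, s. repeat split.
  - apply id_left.
  - exact Hsc.
  - apply id_right.
  - rewrite id_right, comp_assoc, Hsc, id_left. reflexivity.
Qed.

Lemma acyclic_cofibration_retract (cof fib : MapClass C) (t : Ob C)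
    {A B A' B' : Ob C} (i : Hom A B) (j : Hom A' B') :
  cof _ _ i -> retract_of i j -> acyclic_cofibration cof fib t j ->
  acyclic_cofibration cof fib t i.
Proof.
  intros Hi Hij [_ Hj]. split; [exact Hi |].
  intros X Y p Hp HX HY. exact (llp_retract i j p Hij (Hj X Y p Hp HX HY)).
Qed.

End Retracts.

Section CofibrationsAndFibrations.
Context {C : Category} {cof fib : MapClass C} {z t : Ob C}.
Hypothesis Hcof : is_cofibration_class cof z.
Hypothesis Hfib : is_fibration_class fib t.

Lemma cofibration_comp {A B D : Ob C} (f : Hom A B) (g : Hom B D) :
  cof _ _ f -> cof _ _ g -> cof _ _ (g ∘ f).
Proof. destruct Hcof as [_ [_ [_ [Hcomp _]]]]. apply Hcomp. Qed.

Lemma cofibrant_cod {A B : Ob C} (i : Hom A B) :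
  cofibrant cof z A -> cof _ _ i -> cofibrant cof z B.
Proof. intros [a Ha] Hi. exists (i ∘ a). exact (cofibration_comp a i Ha Hi). Qed.

Lemma fibrant_dom {A B : Ob C} (p : Hom A B) :
  fibrant fib t B -> fib _ _ p -> fibrant fib t A.
Proof.
  destruct Hfib as [_ [_ [_ [Hcomp _]]]].
  intros [b Hb] Hp. exists (b ∘ p). exact (Hcomp _ _ _ p b Hp Hb).
Qed.

Lemma pushout_exists_of_cofibration {A B Cc : Ob C} (i : Hom A B) (f : Hom A Cc) :
  cof _ _ i -> cofibrant cof z A -> cofibrant cof z Cc ->
  exists D (j : Hom Cc D) (g : Hom B D), is_pushout i f D j g.
Proof. destruct Hcof as [_ [_ [_ [_ Hpo]]]]. intros Hi HA HCc. apply Hpo; assumption. Qed.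

Lemma pushout_cofibration {A B Cc D : Ob C} (i : Hom A B) (f : Hom A Cc)
    (j : Hom Cc D) (g : Hom B D) :
  cof _ _ i -> cofibrant cof z A -> cofibrant cof z Cc ->
  is_pushout i f D j g -> cof _ _ j.
Proof. destruct Hcof as [_ [_ [_ [_ Hpo]]]]. intros Hi HA HCc. apply Hpo; assumption. Qed.

Lemma pushout_hom_ext {A B Cc D E : Ob C} (i : Hom A B) (f : Hom A Cc)
    (j : Hom Cc D) (g : Hom B D) (h1 h2 : Hom D E) :
  is_pushout i f D j g -> h1 ∘ j = h2 ∘ j -> h1 ∘ g = h2 ∘ g -> h1 = h2.
Proof.
  intros [Hsq Hdesc] Hj Hg.
  destruct (Hdesc E (h1 ∘ j) (h1 ∘ g)) as [h [_ [_ Huniq]]].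
  { rewrite <- !comp_assoc, Hsq. reflexivity. }
  rewrite (Huniq h1 eq_refl eq_refl). symmetry. apply Huniq; symmetry; assumption.
Qed.

Definition acyclic_fibrations : MapClass C := fun X Y p => acyclic_fibration cof fib z p.

Definition sections_acyclic (F : MapClass C) : Prop :=
  forall A B (i : Hom A B) (p : Hom B A), bifibrant cof fib z t A ->
    cof _ _ i -> F _ _ p -> p ∘ i = idm A -> acyclic_cofibration cof fib t i.

Lemma sections_acyclic_of_factorization (F : MapClass C) :
  (forall X Y (f : Hom X Y), cofibrant cof z X -> fibrant fib t Y ->
     exists (Z : Ob C) (i : Hom X Z) (p : Hom Z Y), cof _ _ i /\ F _ _ p /\ p ∘ i = f) ->
  sections_acyclic F -> sections_acyclic acyclic_fibrations.
Proof.
  intros Hfact HF A B i p [HAc HAf] Hi [_ Hp] Hpi.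
  assert (HBc : cofibrant cof z B) by exact (cofibrant_cod i HAc Hi).
  destruct (Hfact B A p HBc HAf) as [E [c [r [Hc [Hr Hrc]]]]].
  assert (HEc : cofibrant cof z E) by exact (cofibrant_cod c HBc Hc).
  assert (Hci : acyclic_cofibration cof fib t (c ∘ i)).
  { apply (HF A E (c ∘ i) r).
    - split; assumption.
    - exact (cofibration_comp i c Hi Hc).
    - exact Hr.
    - rewrite comp_assoc, Hrc. exact Hpi. }
  destruct (Hp B E c Hc HBc HEc (idm B) r) as [s [Hsc _]].
  { rewrite id_right. symmetry. exact Hrc. }
  exact (acyclic_cofibration_retract cof fib t i (c ∘ i) Hi
           (retract_of_comp_split_mono i c s Hsc) Hci).
Qed.

Lemma acyclic_section_of_relative_cylinder {A B : Ob C} (i : Hom A B) (p : Hom B A) :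
  cofibrant cof z A -> cof _ _ i -> acyclic_fibration cof fib z p -> p ∘ i = idm A ->
  has_relative_cylinder cof fib t i -> acyclic_cofibration cof fib t i.
Proof.
  intros HAc Hi [_ Hp] Hpi [P [in1 [in2 [Hpo [I [c [q [Hq1 [Hq2 [Hc Hcin1]]]]]]]]]].
  pose proof Hpo as [Hsq Hdesc].
  assert (HBc : cofibrant cof z B) by exact (cofibrant_cod i HAc Hi).
  assert (HPc : cofibrant cof z P)
    by exact (cofibrant_cod in1 HBc (pushout_cofibration i i in1 in2 Hi HAc HBc Hpo)).
  assert (HIc : cofibrant cof z I) by exact (cofibrant_cod c HPc Hc).
  destruct (Hdesc B (i ∘ p) (idm B)) as [w [Hw1 [Hw2 _]]].
  { rewrite <- comp_assoc, Hpi, id_right, id_left. reflexivity. }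
  destruct (Hp P I c Hc HPc HIc w (p ∘ q)) as [K [HKc _]].
  { rewrite <- comp_assoc in Hq1, Hq2.
    apply (pushout_hom_ext i i in1 in2 _ _ Hpo); rewrite <- !comp_assoc.
    - rewrite Hw1, Hq1, comp_assoc, Hpi, id_left, id_right. reflexivity.
    - rewrite Hw2, Hq2. reflexivity. }
  apply (acyclic_cofibration_retract cof fib t i (c ∘ in1) Hi); [| exact Hcin1].
  exists i, p, (c ∘ in2), K. repeat split.
  - exact Hpi.
  - rewrite comp_assoc, HKc. exact Hw2.
  - rewrite <- !comp_assoc, Hsq. reflexivity.
  - rewrite comp_assoc, HKc, Hw1. reflexivity.
Qed.

Hypothesis Hfact : forall X Y (f : Hom X Y), cofibrant cof z X -> fibrant fib t Y ->
  exists (Z : Ob C) (i : Hom X Z) (p : Hom Z Y),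
    cof _ _ i /\ acyclic_fibration cof fib z p /\ p ∘ i = f.

Lemma relative_cylinder_of_sections_acyclic {A B : Ob C} (i : Hom A B) :
  sections_acyclic acyclic_fibrations -> cofibrant cof z A -> fibrant fib t B ->
  cof _ _ i -> has_relative_cylinder cof fib t i.
Proof.
  intros Hsec HAc HBf Hi.
  assert (HBc : cofibrant cof z B) by exact (cofibrant_cod i HAc Hi).
  destruct (pushout_exists_of_cofibration i i Hi HAc HBc) as [P [in1 [in2 Hpo]]].
  assert (Hin1 : cof _ _ in1) by exact (pushout_cofibration i i in1 in2 Hi HAc HBc Hpo).
  destruct (proj2 Hpo B (idm B) (idm B) eq_refl) as [codiag [Hcd1 [Hcd2 _]]].
  assert (HPc : cofibrant cof z P) by exact (cofibrant_cod in1 HBc Hin1).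
  destruct (Hfact P B codiag HPc HBf) as [I [c [q [Hc [Hq Hqc]]]]].
  exists P, in1, in2. split; [exact Hpo |].
  exists I, c, q. rewrite Hqc. refine (conj Hcd1 (conj Hcd2 (conj Hc _))).
  apply (Hsec B I (c ∘ in1) q).
  - split; assumption.
  - exact (cofibration_comp in1 c Hin1 Hc).
  - exact Hq.
  - rewrite comp_assoc, Hqc. exact Hcd1.
Qed.

End CofibrationsAndFibrations.

Theorem proposition2p3p2 (C : Category) (cof fib : MapClass C) (z t : Ob C)
  (Hcof : is_cofibration_class cof z) (Hfib : is_fibration_class fib t)
  (Hfact1 : forall X Y (f : Hom X Y), cofibrant cof z X -> fibrant fib t Y ->
     exists (Z : Ob C) (i : Hom X Z) (p : Hom Z Y),
       cof _ _ i /\ acyclic_fibration cof fib z p /\ p ∘ i = f)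
  (Hfact2 : forall X Y (f : Hom X Y), cofibrant cof z X -> fibrant fib t Y ->
     exists (Z : Ob C) (i : Hom X Z) (p : Hom Z Y),
       acyclic_cofibration cof fib t i /\ fib _ _ p /\ p ∘ i = f) :
  let cond_i :=
    forall A B (i : Hom A B) (p : Hom B A), bifibrant cof fib z t A ->
      cof _ _ i -> acyclic_fibration cof fib z p -> p ∘ i = idm A ->
      acyclic_cofibration cof fib t i in
  let cond_ii :=
    exists F : MapClass C,
      (forall X Y (p : Hom X Y), F _ _ p -> acyclic_fibration cof fib z p) /\
      (forall X Y (f : Hom X Y), cofibrant cof z X -> fibrant fib t Y ->
         exists (Z : Ob C) (i : Hom X Z) (p : Hom Z Y),
           cof _ _ i /\ F _ _ p /\ p ∘ i = f) /\
      (forall A B (i : Hom A B) (p : Hom B A), bifibrant cof fib z t A ->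
         cof _ _ i -> F _ _ p -> p ∘ i = idm A ->
         acyclic_cofibration cof fib t i) in
  let cond_iii :=
    forall A B (i : Hom A B), cofibrant cof z A -> fibrant fib t B ->
      cof _ _ i -> has_relative_cylinder cof fib t i in
  let cond_iv :=
    forall A B (i : Hom A B), bifibrant cof fib z t A -> bifibrant cof fib z t B ->
      cof _ _ i -> has_relative_cylinder cof fib t i in
  (cond_i <-> cond_ii) /\ (cond_i <-> cond_iii) /\ (cond_i <-> cond_iv).
Proof.
  intros cond_i cond_ii cond_iii cond_iv.
  assert (i_ii : cond_i -> cond_ii).
  { intros Hi. exists (@acyclic_fibrations C cof fib z). exact (conj (fun _ _ _ Hp => Hp) (conj Hfact1 Hi)). }
  assert (ii_i : cond_ii -> cond_i).
  { intros [F [_ [HF Hsec]]]. exact (sections_acyclic_of_factorization Hcof F HF Hsec). }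
  assert (i_iii : cond_i -> cond_iii).
  { intros Hi A B i HA HB Hcofi.
    exact (relative_cylinder_of_sections_acyclic Hcof Hfact1 i Hi HA HB Hcofi). }
  assert (iii_iv : cond_iii -> cond_iv).
  { intros Hiii A B i [HA _] [_ HB]. exact (Hiii A B i HA HB). }
  assert (iv_i : cond_iv -> cond_i).
  { intros Hiv A B i p [HAc HAf] Hcofi Hp Hpi.
    apply (acyclic_section_of_relative_cylinder Hcof i p HAc Hcofi Hp Hpi).
    apply (Hiv A B i (conj HAc HAf)); [split | exact Hcofi].
    - exact (cofibrant_cod Hcof i HAc Hcofi).
    - exact (fibrant_dom Hfib p HAf (proj1 Hp)). }
  tauto.
Qed.
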